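(* Given a linear-non-linear adjunction $\mathcal F\dashv\mathcal U$, define $\mathcal U^S:LS(\mathscr C)\to S(\mathscr C)$ by $\mathcal U^S(X,A):=(X,\mathcal U(A))$ and, for $(f,u):(X,A)\to(Y,B)$, $\mathcal U^S(f,u):=(f,(\eta_X\times\mathrm{id}_{\mathcal U(A)});n_{\mathcal F(X),A};\mathcal U(u))$. Then $\mathcal U^S$ is a functor and a split fibred functor from $\mathbf{ls}$ to $\mathbf s$ (i.e. $\mathbf s\circ\mathcal U^S=\mathbf{ls}$ and $\mathcal U^S$ sends the chosen cartesian morphisms of $\mathbf{ls}$ to those of $\mathbf s$). Moreover, on each fibre over $X$ it is a symmetric lax monoidal functor from $(LS(\mathscr C)_X,\otimes_X,(X,1))$ to $(S(\mathscr C)_X,\times_X,(X,I))$, with structure maps $(\mathrm{id}_X,\pi_2;n_I):(X,I)\to\mathcal U^S(X,1)$ and $(\mathrm{id}_X,\pi_2;n_{A,B}):\mathcal U^S(X,A)\times_X\mathcal U^S(X,B)\to\mathcal U^S((X,A)\otimes_X(X,B))$.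
   Context: Composition is diagrammatic; monoidal categories are strict. A linear-non-linear adjunction is a symmetric monoidal adjunction $\mathcal F\dashv\mathcal U$, $\mathcal F:\mathscr C\to\mathcal L$, between a cartesian category $(\mathscr C,\times,I)$ and a symmetric monoidal category $(\mathcal L,\otimes,1)$ (symmetry $\sigma$); $\mathcal U$ lax monoidal via $n_{A,B}:\mathcal U(A)\times\mathcal U(B)\to\mathcal U(A\otimes B)$, $n_I:I\to\mathcal U(1)$; $\mathcal F$ strong monoidal via isomorphisms $m_{X,Y}:\mathcal F(X)\otimes\mathcal F(Y)\to\mathcal F(X\times Y)$, $m_1:1\to\mathcal F(I)$; unit $\eta$. $\mathbf c_X:=\mathcal F(\Delta_X);m_{X,X}^{-1}$, $\mathbf w_X:=\mathcal F(t_X);m_1^{-1}$ with $t_X:X\to I$ terminal. Simple category $S(\mathscr C)$: objects $(X,J)$, $X,J\in\mathscr C$; morphisms $(f,u):(X,J)\to(Y,K)$ with $f:X\to Y$, $u:X\times J\to K$; composition $(f,u);(g,v)=(f;g,(\Delta_X\times\mathrm{id}_J);(f\times u);v)$, identity $(\mathrm{id}_X,\pi_2)$; split fibration $\mathbf s(f,u)=f$ with chosen cartesian morphisms $(f,\pi_2):(X,K)\to(Y,K)$; fibre $S(\mathscr C)_X$ (morphisms $(\mathrm{id}_X,u)$) has cartesian product $(X,J)\times_X(X,K)=(X,J\times K)$, unit $(X,I)$. Linear simple category $LS(\mathscr C)$: objects $(X,A)$, $X\in\mathscr C$, $A\in\mathcal L$; morphisms $(f,u):(X,A)\to(Y,B)$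 with $f:X\to Y$, $u:\mathcal F(X)\otimes A\to B$; composition $(f,u);(g,v)=(f;g,(\mathbf c_X\otimes\mathrm{id}_A);(\mathcal F(f)\otimes u);v)$, identity $(\mathrm{id}_X,\mathbf w_X\otimes\mathrm{id}_A)$; split fibration $\mathbf{ls}(f,u)=f$ with chosen cartesian morphisms $(f,\mathbf w_X\otimes\mathrm{id}_B):(X,B)\to(Y,B)$; fibre $LS(\mathscr C)_X$ has objects $(X,A)$, morphisms $(\mathrm{id}_X,u)$, and monoidal structure $(X,A)\otimes_X(X,B)=(X,A\otimes B)$, unit $(X,1)$, $(\mathrm{id}_X,u)\otimes_X(\mathrm{id}_X,v)=(\mathrm{id}_X,(\mathbf c_X\otimes\mathrm{id}_{A\otimes B});(\mathrm{id}_{\mathcal F(X)}\otimes\sigma_{\mathcal F(X),A}\otimes\mathrm{id}_B);(u\otimes v))$. *)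

(* Composition is DIAGRAMMATIC: f >>> g is
   "first f, then g". *)

Set Implicit Arguments.
Unset Strict Implicit.

Record Category : Type := {
  ob :> Type;
  hom : ob -> ob -> Type;
  idm : forall a, hom a a;
  comp : forall {a b c}, hom a b -> hom b c -> hom a c;
  comp_idl : forall a b (f : hom a b), comp (idm a) f = f;
  comp_idr : forall a b (f : hom a b), comp f (idm b) = f;
  comp_assoc : forall a b c d (f : hom a b) (g : hom b c) (h : hom c d),
      comp (comp f g) h = comp f (comp g h)
}.
Arguments hom {_} _ _.
Arguments idm {_} _.
Arguments comp {_ _ _ _} _ _.

Notation "f >>> g" := (comp f g) (at level 40, left associativity).

Record Functor (C D : Category) : Type := {
  fobj :> C -> D;
  fmap : forall {a b : C}, hom a b -> hom (fobj a) (fobj b);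
  fmap_id : forall a, fmap (idm a) = idm (fobj a);
  fmap_comp : forall a b c (f : hom a b) (g : hom b c),
      fmap (f >>> g) = fmap f >>> fmap g
}.
Arguments fmap {_ _} _ {_ _} _.

Record CartesianCat : Type := {
  ccat :> Category;
  prod : ccat -> ccat -> ccat;
  p1 : forall {X Y : ccat}, hom (prod X Y) X;
  p2 : forall {X Y : ccat}, hom (prod X Y) Y;
  pair : forall {Z X Y : ccat}, hom Z X -> hom Z Y -> hom Z (prod X Y);
  pair_p1 : forall Z X Y (f : hom Z X) (g : hom Z Y), pair f g >>> p1 = f;
  pair_p2 : forall Z X Y (f : hom Z X) (g : hom Z Y), pair f g >>> p2 = g;
  pair_uniq : forall Z X Y (h : hom Z (prod X Y)), h = pair (h >>> p1) (h >>> p2);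
  term : ccat;
  bang : forall X : ccat, hom X term;
  bang_uniq : forall X (h : hom X term), h = bang X
}.
Arguments prod {_} _ _.
Arguments p1 {_ _ _}.
Arguments p2 {_ _ _}.
Arguments pair {_ _ _ _} _ _.
Arguments term {_}.
Arguments bang {_} _.

(* Derived structure: diagonal, product of morphisms, and the canonical
   associator / symmetry of the cartesian monoidal structure.  (Its
   unitors are p2 : I x X -> X and p1 : X x I -> X.) *)
Definition diag {C : CartesianCat} (X : C) : hom X (prod X X) :=
  pair (idm X) (idm X).
Definition fprod {C : CartesianCat} {X Y X' Y' : C}
  (f : hom X X') (g : hom Y Y') : hom (prod X Y) (prod X' Y') :=
  pair (p1 >>> f) (p2 >>> g).
Definition cassoc {C : CartesianCat} (X Y Z : C) :
  hom (prod (prod X Y) Z) (prod X (prod Y Z)) :=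
  pair (p1 >>> p1) (pair (p1 >>> p2) p2).
Definition cswap {C : CartesianCat} (X Y : C) : hom (prod X Y) (prod Y X) :=
  pair p2 p1.

Record SymMonCat : Type := {
  mcat :> Category;
  tens : mcat -> mcat -> mcat;
  tensm : forall {A B A' B' : mcat}, hom A A' -> hom B B' -> hom (tens A B) (tens A' B');
  tensm_id : forall A B, tensm (idm A) (idm B) = idm (tens A B);
  tensm_comp : forall A B A' B' A'' B'' (f : hom A A') (f' : hom A' A'')
      (g : hom B B') (g' : hom B' B''),
      tensm (f >>> f') (g >>> g') = tensm f g >>> tensm f' g';
  munit : mcat;
  alpha : forall A B C : mcat, hom (tens (tens A B) C) (tens A (tens B C));
  alpha_inv : forall A B C : mcat, hom (tens A (tens B C)) (tens (tens A B) C);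
  alpha_iso1 : forall A B C, alpha A B C >>> alpha_inv A B C = idm _;
  alpha_iso2 : forall A B C, alpha_inv A B C >>> alpha A B C = idm _;
  alpha_nat : forall A B C A' B' C' (f : hom A A') (g : hom B B') (h : hom C C'),
      tensm (tensm f g) h >>> alpha A' B' C' = alpha A B C >>> tensm f (tensm g h);
  lam : forall A : mcat, hom (tens munit A) A;
  lam_inv : forall A : mcat, hom A (tens munit A);
  lam_iso1 : forall A, lam A >>> lam_inv A = idm _;
  lam_iso2 : forall A, lam_inv A >>> lam A = idm _;
  lam_nat : forall A A' (f : hom A A'), tensm (idm munit) f >>> lam A' = lam A >>> f;
  rho : forall A : mcat, hom (tens A munit) A;
  rho_inv : forall A : mcat, hom A (tens A munit);
  rho_iso1 : forall A, rho A >>> rho_inv A = idm _;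
  rho_iso2 : forall A, rho_inv A >>> rho A = idm _;
  rho_nat : forall A A' (f : hom A A'), tensm f (idm munit) >>> rho A' = rho A >>> f;
  sigma : forall A B : mcat, hom (tens A B) (tens B A);
  sigma_nat : forall A B A' B' (f : hom A A') (g : hom B B'),
      tensm f g >>> sigma A' B' = sigma A B >>> tensm g f;
  sigma_invol : forall A B, sigma A B >>> sigma B A = idm _;
  pentagon : forall A B C D,
      alpha (tens A B) C D >>> alpha A B (tens C D)
      = tensm (alpha A B C) (idm D) >>> alpha A (tens B C) D >>> tensm (idm A) (alpha B C D);
  triangle : forall A B,
      alpha A munit B >>> tensm (idm A) (lam B) = tensm (rho A) (idm B);
  hexagon : forall A B C,
      alpha A B C >>> sigma A (tens B C) >>> alpha B C A
      = tensm (sigma A B) (idm C) >>> alpha B A C >>> tensm (idm B) (sigma A C)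
}.
Arguments tens {_} _ _.
Arguments tensm {_ _ _ _ _} _ _.
Arguments munit {_}.
Arguments alpha {_} _ _ _.
Arguments alpha_inv {_} _ _ _.
Arguments lam {_} _.
Arguments lam_inv {_} _.
Arguments rho {_} _.
Arguments rho_inv {_} _.
Arguments sigma {_} _ _.

Record LNL : Type := {
  lC : CartesianCat;
  lL : SymMonCat;
  lF : Functor lC lL;
  lU : Functor lL lC;
  eta : forall X : lC, hom X (lU (lF X));
  eps : forall A : lL, hom (lF (lU A)) A;
  eta_nat : forall (X Y : lC) (f : hom X Y),
      f >>> eta Y = eta X >>> fmap lU (fmap lF f);
  eps_nat : forall (A B : lL) (g : hom A B),
      fmap lF (fmap lU g) >>> eps B = eps A >>> g;
  triangle_F : forall X : lC, fmap lF (eta X) >>> eps (lF X) = idm _;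
  triangle_U : forall A : lL, eta (lU A) >>> fmap lU (eps A) = idm _;
  mF : forall X Y : lC, hom (tens (lF X) (lF Y)) (lF (prod X Y));
  mF_inv : forall X Y : lC, hom (lF (prod X Y)) (tens (lF X) (lF Y));
  mF_iso1 : forall X Y, mF X Y >>> mF_inv X Y = idm _;
  mF_iso2 : forall X Y, mF_inv X Y >>> mF X Y = idm _;
  mF1 : hom (@munit lL) (lF term);
  mF1_inv : hom (lF term) (@munit lL);
  mF1_iso1 : mF1 >>> mF1_inv = idm _;
  mF1_iso2 : mF1_inv >>> mF1 = idm _;
  mF_nat : forall (X Y X' Y' : lC) (f : hom X X') (g : hom Y Y'),
      tensm (fmap lF f) (fmap lF g) >>> mF X' Y' = mF X Y >>> fmap lF (fprod f g);
  mF_assoc : forall X Y Z : lC,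
      tensm (mF X Y) (idm (lF Z)) >>> mF (prod X Y) Z >>> fmap lF (cassoc X Y Z)
      = alpha (lF X) (lF Y) (lF Z) >>> tensm (idm (lF X)) (mF Y Z) >>> mF X (prod Y Z);
  mF_lunit : forall X : lC,
      tensm mF1 (idm (lF X)) >>> mF term X >>> fmap lF p2 = lam (lF X);
  mF_runit : forall X : lC,
      tensm (idm (lF X)) mF1 >>> mF X term >>> fmap lF p1 = rho (lF X);
  mF_sym : forall X Y : lC,
      sigma (lF X) (lF Y) >>> mF Y X = mF X Y >>> fmap lF (cswap X Y);
  nU : forall A B : lL, hom (prod (lU A) (lU B)) (lU (tens A B));
  nU0 : hom (@term lC) (lU munit);
  nU_nat : forall (A B A' B' : lL) (f : hom A A') (g : hom B B'),
      fprod (fmap lU f) (fmap lU g) >>> nU A' B' = nU A B >>> fmap lU (tensm f g);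
  nU_assoc : forall A B C : lL,
      fprod (nU A B) (idm (lU C)) >>> nU (tens A B) C >>> fmap lU (alpha A B C)
      = cassoc (lU A) (lU B) (lU C) >>> fprod (idm (lU A)) (nU B C) >>> nU A (tens B C);
  nU_lunit : forall A : lL,
      fprod nU0 (idm (lU A)) >>> nU munit A >>> fmap lU (lam A) = p2;
  nU_runit : forall A : lL,
      fprod (idm (lU A)) nU0 >>> nU A munit >>> fmap lU (rho A) = p1;
  nU_sym : forall A B : lL,
      cswap (lU A) (lU B) >>> nU B A = nU A B >>> fmap lU (sigma A B);
  eta_mon : forall X Y : lC,
      fprod (eta X) (eta Y) >>> nU (lF X) (lF Y) >>> fmap lU (mF X Y) = eta (prod X Y);
  eta_mon0 : nU0 >>> fmap lU mF1 = eta term;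
  eps_mon : forall A B : lL,
      mF (lU A) (lU B) >>> fmap lF (nU A B) >>> eps (tens A B) = tensm (eps A) (eps B);
  eps_mon0 : mF1 >>> fmap lF nU0 >>> eps munit = idm munit
}.
Arguments eta l X : clear implicits.
Arguments eps l A : clear implicits.
Arguments mF l X Y : clear implicits.
Arguments mF_inv l X Y : clear implicits.
Arguments mF1 l : clear implicits.
Arguments mF1_inv l : clear implicits.
Arguments nU l A B : clear implicits.
Arguments nU0 l : clear implicits.

Definition cmap {M : LNL} (X : lC M) : hom (lF M X) (tens (lF M X) (lF M X)) :=
  fmap (lF M) (diag X) >>> mF_inv M X X.
Definition wmap {M : LNL} (X : lC M) : hom (lF M X) (@munit (lL M)) :=
  fmap (lF M) (bang X) >>> mF1_inv M.

Definition Sob (C : CartesianCat) : Type := (ob C * ob C)%type.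
Record SHom (C : CartesianCat) (P Q : Sob C) : Type := mkSHom {
  s_base : hom (fst P) (fst Q);
  s_fib : hom (prod (fst P) (snd P)) (snd Q)
}.
Arguments mkSHom {_ _ _} _ _.
Arguments s_base {_ _ _} _.
Arguments s_fib {_ _ _} _.

Definition S_id {C : CartesianCat} (P : Sob C) : SHom P P :=
  mkSHom (idm (fst P)) p2.
(* (f,u);(g,v) = (f;g, (Delta_X x id_J);(f x u);v), with the associator
   (X x X) x J -> X x (X x J) made explicit. *)
Definition S_comp {C : CartesianCat} {P Q R : Sob C}
  (h : SHom P Q) (k : SHom Q R) : SHom P R :=
  mkSHom (s_base h >>> s_base k)
    (fprod (diag (fst P)) (idm (snd P)) >>> cassoc (fst P) (fst P) (snd P)
       >>> fprod (s_base h) (s_fib h) >>> s_fib k).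
Definition S_cart {C : CartesianCat} {X Y : C} (f : hom X Y) (K : C) :
  SHom (X, K) (Y, K) := @mkSHom C (X, K) (Y, K) f p2.

Definition LSob (M : LNL) : Type := (ob (lC M) * ob (lL M))%type.
Record LSHom (M : LNL) (P Q : LSob M) : Type := mkLSHom {
  ls_base : hom (fst P) (fst Q);
  ls_fib : hom (tens (lF M (fst P)) (snd P)) (snd Q)
}.
Arguments mkLSHom {_ _ _} _ _.
Arguments ls_base {_ _ _} _.
Arguments ls_fib {_ _ _} _.

(* identity (id_X, w_X (x) id_A), with the unitor 1 (x) A -> A explicit *)
Definition LS_id {M : LNL} (P : LSob M) : LSHom P P :=
  mkLSHom (idm (fst P)) (tensm (wmap (fst P)) (idm (snd P)) >>> lam (snd P)).
(* (f,u);(g,v) = (f;g, (c_X (x) id_A);(F f (x) u);v), with the associator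
   explicit *)
Definition LS_comp {M : LNL} {P Q R : LSob M}
  (h : LSHom P Q) (k : LSHom Q R) : LSHom P R :=
  mkLSHom (ls_base h >>> ls_base k)
    (tensm (cmap (fst P)) (idm (snd P))
       >>> alpha (lF M (fst P)) (lF M (fst P)) (snd P)
       >>> tensm (fmap (lF M) (ls_base h)) (ls_fib h) >>> ls_fib k).
Definition LS_cart {M : LNL} {X Y : lC M} (f : hom X Y) (B : lL M) :
  LSHom (X, B) (Y, B) := @mkLSHom M (X, B) (Y, B) f (tensm (wmap X) (idm B) >>> lam B).

Definition US_ob {M : LNL} (P : LSob M) : Sob (lC M) := (fst P, lU M (snd P)).
Definition US_hom {M : LNL} {P Q : LSob M} (h : LSHom P Q) :
  SHom (US_ob P) (US_ob Q) :=
  @mkSHom (lC M) (US_ob P) (US_ob Q) (ls_base h)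
    (fprod (eta M (fst P)) (idm (lU M (snd P))) >>> nU M (lF M (fst P)) (snd P)
       >>> fmap (lU M) (ls_fib h)).

Definition S_vert {C : CartesianCat} {X J K : C} (u : hom (prod X J) K) :
  SHom (X, J) (X, K) := @mkSHom C (X, J) (X, K) (idm X) u.
Definition LS_vert {M : LNL} {X : lC M} {A B : lL M}
  (u : hom (tens (lF M X) A) B) : LSHom (X, A) (X, B) := @mkLSHom M (X, A) (X, B) (idm X) u.

Definition Sv_id {C : CartesianCat} (X J : C) : hom (prod X J) J := p2.
Definition Sv_tens {C : CartesianCat} {X J K J' K' : C}
  (u : hom (prod X J) J') (v : hom (prod X K) K') :
  hom (prod X (prod J K)) (prod J' K') :=
  pair (fprod (idm X) p1 >>> u) (fprod (idm X) p2 >>> v).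
Definition Sv_assoc {C : CartesianCat} (X J K L : C) :
  hom (prod X (prod (prod J K) L)) (prod J (prod K L)) := p2 >>> cassoc J K L.
Definition Sv_lunit {C : CartesianCat} (X J : C) :
  hom (prod X (prod term J)) J := p2 >>> p2.
Definition Sv_runit {C : CartesianCat} (X J : C) :
  hom (prod X (prod J term)) J := p2 >>> p1.
Definition Sv_sym {C : CartesianCat} (X J K : C) :
  hom (prod X (prod J K)) (prod K J) := p2 >>> cswap J K.

Definition LSv_lift {M : LNL} (X : lC M) {A B : lL M} (g : hom A B) :
  hom (tens (lF M X) A) B := tensm (wmap X) g >>> lam B.
(* (id,u) (x)_X (id,v) =
   (id, (c_X (x) id);(id (x) sigma_{FX,A} (x) id);(u (x) v)),
   with associators made explicit *)
Definition LSv_tens {M : LNL} {X : lC M} {A B A' B' : lL M}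
  (u : hom (tens (lF M X) A) A') (v : hom (tens (lF M X) B) B') :
  hom (tens (lF M X) (tens A B)) (tens A' B') :=
  tensm (cmap X) (idm (tens A B))
  >>> alpha (lF M X) (lF M X) (tens A B)
  >>> tensm (idm (lF M X)) (alpha_inv (lF M X) A B)
  >>> tensm (idm (lF M X)) (tensm (sigma (lF M X) A) (idm B))
  >>> tensm (idm (lF M X)) (alpha A (lF M X) B)
  >>> alpha_inv (lF M X) A (tens (lF M X) B)
  >>> tensm u v.
Definition LSv_assoc {M : LNL} (X : lC M) (A B C : lL M) :
  hom (tens (lF M X) (tens (tens A B) C)) (tens A (tens B C)) :=
  LSv_lift X (alpha A B C).
Definition LSv_lunit {M : LNL} (X : lC M) (A : lL M) :
  hom (tens (lF M X) (tens munit A)) A := LSv_lift X (lam A).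
Definition LSv_runit {M : LNL} (X : lC M) (A : lL M) :
  hom (tens (lF M X) (tens A munit)) A := LSv_lift X (rho A).
Definition LSv_sym {M : LNL} (X : lC M) (A B : lL M) :
  hom (tens (lF M X) (tens A B)) (tens B A) := LSv_lift X (sigma A B).

Definition USv {M : LNL} {X : lC M} {A B : lL M}
  (u : hom (tens (lF M X) A) B) : hom (prod X (lU M A)) (lU M B) :=
  s_fib (US_hom (LS_vert u)).

Definition phi0 {M : LNL} (X : lC M) : hom (prod X term) (lU M munit) :=
  p2 >>> nU0 M.
Definition phi2 {M : LNL} (X : lC M) (A B : lL M) :
  hom (prod X (prod (lU M A) (lU M B))) (lU M (tens A B)) :=
  p2 >>> nU M A B.

Definition US_is_functor (M : LNL) : Prop :=
  (forall P : LSob M, US_hom (LS_id P) = S_id (US_ob P)) /\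
  (forall (P Q R : LSob M) (h : LSHom P Q) (k : LSHom Q R),
      US_hom (LS_comp h k) = S_comp (US_hom h) (US_hom k)).

Definition US_split_fibred (M : LNL) : Prop :=
  (forall P : LSob M, fst (US_ob P) = fst P) /\
  (forall (P Q : LSob M) (h : LSHom P Q), s_base (US_hom h) = ls_base h) /\
  (forall (X Y : lC M) (f : hom X Y) (B : lL M),
      US_hom (LS_cart f B) = S_cart f (lU M B)).

Definition US_fibre_sym_lax_monoidal (M : LNL) (X : lC M) : Prop :=
  (forall (A A' B B' : lL M) (u : hom (tens (lF M X) A) A')
          (v : hom (tens (lF M X) B) B'),
      S_comp (S_vert (Sv_tens (USv u) (USv v))) (S_vert (phi2 X A' B'))
      = S_comp (S_vert (phi2 X A B)) (US_hom (LS_vert (LSv_tens u v)))) /\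
  (forall A B C : lL M,
      S_comp (S_comp (S_vert (Sv_tens (phi2 X A B) (Sv_id X (lU M C))))
                     (S_vert (phi2 X (tens A B) C)))
             (US_hom (LS_vert (LSv_assoc X A B C)))
      = S_comp (S_comp (S_vert (Sv_assoc X (lU M A) (lU M B) (lU M C)))
                       (S_vert (Sv_tens (Sv_id X (lU M A)) (phi2 X B C))))
               (S_vert (phi2 X A (tens B C)))) /\
  (forall A : lL M,
      S_comp (S_comp (S_vert (Sv_tens (phi0 X) (Sv_id X (lU M A))))
                     (S_vert (phi2 X munit A)))
             (US_hom (LS_vert (LSv_lunit X A)))
      = S_vert (Sv_lunit X (lU M A))) /\
  (forall A : lL M,
      S_comp (S_comp (S_vert (Sv_tens (Sv_id X (lU M A)) (phi0 X)))
                     (S_vert (phi2 X A munit)))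
             (US_hom (LS_vert (LSv_runit X A)))
      = S_vert (Sv_runit X (lU M A))) /\
  (forall A B : lL M,
      S_comp (S_vert (Sv_sym X (lU M A) (lU M B))) (S_vert (phi2 X B A))
      = S_comp (S_vert (phi2 X A B)) (US_hom (LS_vert (LSv_sym X A B)))).
Arguments US_fibre_sym_lax_monoidal : clear implicits.


(* The fibre component of U^S(f,u) is the map (x, a) |-> U(u)(n(eta x, a)), so
   every law reduces to an equation between maps built from pairings, n, eta
   and images under U.  Such maps are normalised by the coherence of the lax
   structure n (naturality, associativity, unitality, symmetry) together with
   the fact that eta is a map of comonoids: eta;U(c_X) = <eta, eta>;n and
   eta;U(w_X) = !;n_I, which is where the monoidality of eta is used. *)

Lemma reassoc {C : Category} {a b c d : C} {f : hom a b} {g : hom b c}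
  {h : hom a c} (E : f >>> g = h) (k : hom c d) :
  f >>> (g >>> k) = h >>> k.
Proof. now rewrite <- E, comp_assoc. Qed.

Lemma reassoc3 {C : Category} {a b c d e : C} {f : hom a b} {g : hom b c}
  {h : hom c d} {r : hom a d} (E : f >>> (g >>> h) = r) (k : hom d e) :
  f >>> (g >>> (h >>> k)) = r >>> k.
Proof. now rewrite <- E, !comp_assoc. Qed.

Section CartesianFacts.
Context {C : CartesianCat}.

Lemma pair_comp {Z' Z X Y : C} (e : hom Z' Z) (f : hom Z X) (g : hom Z Y) :
  e >>> pair f g = pair (e >>> f) (e >>> g).
Proof.
  now rewrite (pair_uniq (e >>> pair f g)), !comp_assoc, pair_p1, pair_p2.
Qed.

Lemma pair_eta {Z X Y : C} (h : hom Z (prod X Y)) :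
  pair (h >>> p1) (h >>> p2) = h.
Proof. symmetry; apply pair_uniq. Qed.

Lemma pair_fprod {Z X Y X' Y' : C} (f : hom Z X) (g : hom Z Y)
  (a : hom X X') (b : hom Y Y') :
  pair f g >>> fprod a b = pair (f >>> a) (g >>> b).
Proof.
  unfold fprod; now rewrite pair_comp, <- !comp_assoc, pair_p1, pair_p2.
Qed.

Lemma comp_into_term {X Y : C} (f : hom X Y) (g : hom Y term) :
  f >>> g = bang X.
Proof. apply bang_uniq. Qed.

Lemma SHom_ext {P Q : Sob C} (h k : SHom P Q) :
  s_base h = s_base k -> s_fib h = s_fib k -> h = k.
Proof. destruct h, k; simpl; intros -> ->; reflexivity. Qed.

End CartesianFacts.

(* Composites are kept right-associated; the [reassoc] instances let each law
   fire inside a longer composite. *)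
Ltac simpl_pair :=
  repeat progress (unfold fprod, diag, cassoc, cswap;
    rewrite ?comp_assoc, ?comp_idl, ?comp_idr,
      ?pair_p1, ?(reassoc (pair_p1 _ _)), ?pair_p2, ?(reassoc (pair_p2 _ _)),
      ?pair_comp, ?(reassoc (pair_comp _ _ _)),
      ?comp_into_term, ?(reassoc (comp_into_term _ _))).

Section LaxPairing.
Context {M : LNL}.

Lemma nU_pair_tensm {Z : lC M} {A B A' B' : lL M} (f : hom Z (lU M A))
  (g : hom Z (lU M B)) (h : hom A A') (k : hom B B') :
  pair f g >>> (nU M A B >>> fmap (lU M) (tensm h k))
  = pair (f >>> fmap (lU M) h) (g >>> fmap (lU M) k) >>> nU M A' B'.
Proof.
  now rewrite <- nU_nat, <- comp_assoc, pair_fprod.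
Qed.

Lemma nU_pair_alpha {Z : lC M} {A B D : lL M} (f : hom Z (lU M A))
  (g : hom Z (lU M B)) (h : hom Z (lU M D)) :
  pair (pair f g >>> nU M A B) h >>> (nU M _ D >>> fmap (lU M) (alpha A B D))
  = pair f (pair g h >>> nU M B D) >>> nU M A _.
Proof.
  assert (Hsplit : pair (pair f g) h >>> fprod (nU M A B) (idm _)
                   = pair (pair f g >>> nU M A B) h)
    by now rewrite pair_fprod, comp_idr.
  rewrite <- Hsplit, !comp_assoc, <- (comp_assoc (fprod _ _)), nU_assoc.
  now simpl_pair.
Qed.

Lemma nU_pair_alpha_inv {Z : lC M} {A B D : lL M} (f : hom Z (lU M A))
  (g : hom Z (lU M B)) (h : hom Z (lU M D)) :
  pair f (pair g h >>> nU M B D) >>> (nU M A _ >>> fmap (lU M) (alpha_inv A B D))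
  = pair (pair f g >>> nU M A B) h >>> nU M _ D.
Proof.
  rewrite <- comp_assoc, <- nU_pair_alpha, !comp_assoc, <- fmap_comp, alpha_iso1.
  now rewrite fmap_id, comp_idr.
Qed.

Lemma nU_pair_sigma {Z : lC M} {A B : lL M} (f : hom Z (lU M A))
  (g : hom Z (lU M B)) :
  pair f g >>> (nU M A B >>> fmap (lU M) (sigma A B)) = pair g f >>> nU M B A.
Proof.
  rewrite <- nU_sym, <- comp_assoc; unfold cswap.
  now rewrite pair_comp, pair_p1, pair_p2.
Qed.

Lemma nU_pair_lam {Z : lC M} {A : lL M} (f : hom Z (lU M A)) :
  pair (bang Z >>> nU0 M) f >>> (nU M munit A >>> fmap (lU M) (lam A)) = f.
Proof.
  assert (Hsplit : pair (bang Z) f >>> fprod (nU0 M) (idm _) = pair (bang Z >>> nU0 M) f)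
    by now rewrite pair_fprod, comp_idr.
  now rewrite <- Hsplit, comp_assoc, <- (comp_assoc (fprod _ _)), nU_lunit, pair_p2.
Qed.

Lemma nU_pair_rho {Z : lC M} {A : lL M} (f : hom Z (lU M A)) :
  pair f (bang Z >>> nU0 M) >>> (nU M A munit >>> fmap (lU M) (rho A)) = f.
Proof.
  assert (Hsplit : pair f (bang Z) >>> fprod (idm _) (nU0 M) = pair f (bang Z >>> nU0 M))
    by now rewrite pair_fprod, comp_idr.
  now rewrite <- Hsplit, comp_assoc, <- (comp_assoc (fprod _ _)), nU_runit, pair_p1.
Qed.

Lemma eta_cmap (X : lC M) :
  eta M X >>> fmap (lU M) (cmap X) = pair (eta M X) (eta M X) >>> nU M _ _.
Proof.
  unfold cmap; rewrite fmap_comp, <- comp_assoc, <- eta_nat, <- eta_mon.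
  rewrite !comp_assoc, <- fmap_comp, mF_iso1, fmap_id, comp_idr.
  unfold diag; now rewrite <- comp_assoc, pair_fprod, !comp_idl.
Qed.

Lemma eta_wmap (X : lC M) :
  eta M X >>> fmap (lU M) (wmap X) = bang X >>> nU0 M.
Proof.
  unfold wmap; rewrite fmap_comp, <- comp_assoc, <- eta_nat, <- eta_mon0.
  now rewrite !comp_assoc, <- fmap_comp, mF1_iso1, fmap_id, comp_idr.
Qed.

End LaxPairing.

Ltac simpl_hom :=
  repeat progress (simpl_pair;
    rewrite ?fmap_comp, ?fmap_id,
      ?nU_pair_tensm, ?(reassoc3 (nU_pair_tensm _ _ _ _)),
      ?nU_pair_alpha, ?(reassoc3 (nU_pair_alpha _ _ _)),
      ?nU_pair_alpha_inv, ?(reassoc3 (nU_pair_alpha_inv _ _ _)),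
      ?nU_pair_sigma, ?(reassoc3 (nU_pair_sigma _ _)),
      ?nU_pair_lam, ?(reassoc3 (nU_pair_lam _)),
      ?nU_pair_rho, ?(reassoc3 (nU_pair_rho _)),
      ?eta_cmap, ?(reassoc (eta_cmap _)), ?eta_wmap, ?(reassoc (eta_wmap _))).

Section SimpleFunctor.
Context {M : LNL}.

Lemma US_hom_id (P : LSob M) : US_hom (LS_id P) = S_id (US_ob P).
Proof. apply SHom_ext; simpl; now simpl_hom. Qed.

Lemma US_hom_comp (P Q R : LSob M) (h : LSHom P Q) (k : LSHom Q R) :
  US_hom (LS_comp h k) = S_comp (US_hom h) (US_hom k).
Proof.
  apply SHom_ext; simpl; simpl_hom; [reflexivity|].
  now rewrite (eta_nat (ls_base h)); simpl_hom.
Qed.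

Lemma US_hom_cart (X Y : lC M) (f : hom X Y) (B : lL M) :
  US_hom (LS_cart f B) = S_cart f (lU M B).
Proof. apply SHom_ext; simpl; now simpl_hom. Qed.

Section Fibre.
Variable X : lC M.

Lemma phi2_natural (A A' B B' : lL M) (u : hom (tens (lF M X) A) A')
  (v : hom (tens (lF M X) B) B') :
  S_comp (S_vert (Sv_tens (USv u) (USv v))) (S_vert (phi2 X A' B'))
  = S_comp (S_vert (phi2 X A B)) (US_hom (LS_vert (LSv_tens u v))).
Proof.
  apply SHom_ext; unfold USv, Sv_tens, phi2, LSv_tens; simpl; simpl_hom;
    [reflexivity|].
  (* [phi2] applies [n] to the bare projection [p2]; expanding it by surjective
     pairing lets the coherence laws of [n] fire. *)
  now rewrite <- (pair_eta (@p2 _ X (prod (lU M A) (lU M B)))); simpl_hom.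
Qed.

Lemma phi2_assoc (A B D : lL M) :
  S_comp (S_comp (S_vert (Sv_tens (phi2 X A B) (Sv_id X (lU M D))))
                 (S_vert (phi2 X (tens A B) D)))
         (US_hom (LS_vert (LSv_assoc X A B D)))
  = S_comp (S_comp (S_vert (Sv_assoc X (lU M A) (lU M B) (lU M D)))
                   (S_vert (Sv_tens (Sv_id X (lU M A)) (phi2 X B D))))
           (S_vert (phi2 X A (tens B D))).
Proof.
  apply SHom_ext; unfold Sv_tens, Sv_id, Sv_assoc, phi2, LSv_assoc, LSv_lift;
    simpl; simpl_hom; [reflexivity|].
  now rewrite <- (pair_eta (@p1 _ (prod (lU M A) (lU M B)) (lU M D))); simpl_hom.
Qed.

Lemma phi_lunit (A : lL M) :
  S_comp (S_comp (S_vert (Sv_tens (phi0 X) (Sv_id X (lU M A))))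
                 (S_vert (phi2 X munit A)))
         (US_hom (LS_vert (LSv_lunit X A)))
  = S_vert (Sv_lunit X (lU M A)).
Proof.
  apply SHom_ext; unfold Sv_tens, Sv_id, Sv_lunit, phi2, phi0, LSv_lunit, LSv_lift;
    simpl; now simpl_hom.
Qed.

Lemma phi_runit (A : lL M) :
  S_comp (S_comp (S_vert (Sv_tens (Sv_id X (lU M A)) (phi0 X)))
                 (S_vert (phi2 X A munit)))
         (US_hom (LS_vert (LSv_runit X A)))
  = S_vert (Sv_runit X (lU M A)).
Proof.
  apply SHom_ext; unfold Sv_tens, Sv_id, Sv_runit, phi2, phi0, LSv_runit, LSv_lift;
    simpl; now simpl_hom.
Qed.

Lemma phi2_sym (A B : lL M) :
  S_comp (S_vert (Sv_sym X (lU M A) (lU M B))) (S_vert (phi2 X B A))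
  = S_comp (S_vert (phi2 X A B)) (US_hom (LS_vert (LSv_sym X A B))).
Proof.
  apply SHom_ext; unfold Sv_sym, phi2, LSv_sym, LSv_lift; simpl; simpl_hom;
    [reflexivity|].
  now rewrite <- (pair_eta (@p2 _ X (prod (lU M A) (lU M B)))); simpl_hom.
Qed.

Lemma US_fibre_monoidal : US_fibre_sym_lax_monoidal M X.
Proof.
  exact (conj phi2_natural (conj phi2_assoc
           (conj phi_lunit (conj phi_runit phi2_sym)))).
Qed.

End Fibre.
End SimpleFunctor.

Theorem proposition3p11 (M : LNL) :
  US_is_functor M /\ US_split_fibred M /\
  (forall X : lC M, US_fibre_sym_lax_monoidal M X).
Proof.
  split; [exact (conj US_hom_id US_hom_comp)|].
  split; [|exact US_fibre_monoidal].
  split; [reflexivity|].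
  split; [reflexivity|].
  exact US_hom_cart.
Qed.
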